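(* Let $X$ be a super $X$-set parameter, let $t\ge 0$ be an integer, let $G$ be a graph, and let $H$ be an induced subgraph of $\mathfrak{X}(G)$ with $H\cong Q_t$. Then there are $X$-sets $S\subseteq T$ of $G$ with $|T\setminus S|=t$ such that $V(H)=\{R: S\subseteq R\subseteq T\}$; i.e., $V(H)$ is an interval of length $t$ in the poset $(\mathcal{P}(V(G)),\subseteq)$.
   Context: All graphs are finite, simple, undirected, with nonempty vertex set. A super $X$-set parameter $X$ assigns to each graph $G$ a family of subsets of $V(G)$, called the $X$-sets of $G$, such that: every graph isomorphism maps $X$-sets to $X$-sets; every graph has at least one $X$-set; and (Superset) if $S$ is an $X$-set of $G$ and $S\subseteq S'\subseteq V(G)$, then $S'$ is an $X$-set of $G$. The $X$-TAR graph $\mathfrak{X}(G)$ has as vertices the $X$-sets of $G$, with $S_1S_2$ an edge iff $|S_1\ominus S_2|=1$. $Q_t$ is the $t$-dimensional hypercube. *)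

From mathcomp Require Import all_boot.
Set Implicit Arguments. Unset Strict Implicit. Unset Printing Implicit Defensive.

Definition simple_graph (V : finType) (e : rel V) : Prop :=
  irreflexive e /\ symmetric e /\ 0 < #|V|.

Definition graph_iso (V1 V2 : finType) (e1 : rel V1) (e2 : rel V2)
  (f : V1 -> V2) : Prop :=
  bijective f /\ forall x y, e1 x y = e2 (f x) (f y).

Definition graph_param := forall (V : finType), rel V -> pred {set V}.

Definition super_param (X : graph_param) : Prop :=
  (forall (V1 V2 : finType) (e1 : rel V1) (e2 : rel V2) (f : V1 -> V2),
     simple_graph e1 -> simple_graph e2 -> graph_iso e1 e2 f ->
     forall S : {set V1}, X V1 e1 S -> X V2 e2 (f @: S)) /\
  (forall (V : finType) (e : rel V), simple_graph e ->
     exists S : {set V}, X V e S) /\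
  (forall (V : finType) (e : rel V), simple_graph e ->
     forall S S' : {set V}, X V e S -> S \subset S' -> X V e S').

Definition symdiff (T : finType) (A B : {set T}) : {set T} :=
  (A :\: B) :|: (B :\: A).

(* Adjacency of the X-TAR graph: |S1 (-) S2| = 1
   (its vertex set is the set of X-sets). *)
Definition tar_adj (T : finType) (S1 S2 : {set T}) : bool :=
  #|symdiff S1 S2| == 1.

Definition cube_vertex (t : nat) := {ffun 'I_t -> bool}.
Definition cube_adj (t : nat) (a b : cube_vertex t) : bool :=
  #|[set i | a i != b i]| == 1.

From mathcomp Require Import all_boot.
Set Implicit Arguments. Unset Strict Implicit. Unset Printing Implicit Defensive.

(* Let A be the image of the origin; its neighbours in the copy are
   A (+) {x_i} for distinct vertices x_i.  In the TAR graph two distinct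
   neighbours P, Q of B have at most one further common neighbour, namely
   P (+) Q (+) B, so induction on the Hamming weight shows that a vertex a of
   Q_t is sent to A (+) {x_i : a_i = 1}.  These are exactly the sets between
   A \ {x_i} and A U {x_i}. *)
Section SymmetricDifference.
Variable T : finType.
Implicit Types (A B P Q R Y Z : {set T}) (v y : T).

Lemma in_symdiff A B v : (v \in symdiff A B) = (v \in A) (+) (v \in B).
Proof. by rewrite !inE; case: (v \in A); case: (v \in B). Qed.

Lemma symdiff0 A : symdiff A set0 = A.
Proof. by apply/setP => v; rewrite in_symdiff inE addbF. Qed.

Lemma tar_adj_flip P Q : tar_adj P Q -> exists y, Q = symdiff P [set y].
Proof.
move=> /cards1P[y Py]; exists y; apply/setP => v.
have := in_symdiff P Q v; rewrite Py in_symdiff !inE => ->.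
by case: (v \in P); case: (v \in Q).
Qed.

Lemma tar_adj_setD1 A y : y \in A -> tar_adj (A :\ y) A.
Proof.
move=> Ay; apply/cards1P; exists y; apply/setP => v; rewrite in_symdiff !inE.
by case: eqVneq => [->|]; rewrite ?Ay //=; case: (v \in A).
Qed.

Lemma tar_adj_square B P Q R :
    tar_adj B P -> tar_adj B Q -> tar_adj P R -> tar_adj Q R ->
  P != Q -> R != B -> R = symdiff (symdiff P Q) B.
Proof.
move=> /tar_adj_flip[y ->] /tar_adj_flip[z ->] /tar_adj_flip[w ->].
move=> /tar_adj_flip[w' eR] PQ RB.
have yz : y != z by apply: contraNneq PQ => ->.
have wy : w != y.
  apply: contraNneq RB => ->; apply/eqP/setP => v; rewrite !in_symdiff !inE.
  by case: (v \in B); case: (v == y).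
have eR' v : (v == y) (+) (v == w) = (v == z) (+) (v == w').
  have := congr1 (fun S : {set T} => v \in S) eR; rewrite !in_symdiff !inE.
  by case: (v \in B); case: (v == y); case: (v == w); case: (v == z); case: (v == w').
have wz : w = z.
  apply/eqP; apply: contraNT yz => wz.
  have := eR' w; rewrite eqxx (negbTE wy) (negbTE wz) /= => /esym/eqP w'w.
  by have := eR' y; rewrite eqxx -w'w [y == w]eq_sym (negbTE wy); case: (y == z).
apply/setP => v; rewrite wz !in_symdiff !inE.
by case: (v \in B); case: (v == y); case: (v == z).
Qed.

Lemma symdiff_interval A Y :
  [set symdiff A Z | Z in powerset Y]
  = [set R : {set T} | (A :\: Y \subset R) && (R \subset A :|: Y)].
Proof.
apply/setP => R; rewrite inE; apply/imsetP/andP => [[Z] | [sR Rs]].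
  rewrite powersetE => /subsetP ZY ->.
  split; apply/subsetP => v; rewrite in_symdiff !inE.
    by case/andP=> /negP nYv ->; case: (boolP (v \in Z)) => // /ZY.
  by case: (boolP (v \in Z)) => [/ZY -> | _]; rewrite ?orbT // addbF => ->.
exists [set v in Y | (v \in R) != (v \in A)].
  by rewrite powersetE; apply/subsetP => v; rewrite inE => /andP[].
apply/setP => v; rewrite in_symdiff !inE.
case: (boolP (v \in Y)) => Yv /=; first by case: (v \in R); case: (v \in A).
move: (subsetP sR v) (subsetP Rs v); rewrite !inE (negbTE Yv) orbF addbF /=.
by case: (v \in R); case: (v \in A) => // H1 H2; [have := H2 isT | have := H1 isT].
Qed.

Lemma setUD_setD A Y : (A :|: Y) :\: (A :\: Y) = Y.
Proof. by apply/setP => v; rewrite !inE; case: (v \in Y); case: (v \in A). Qed.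

End SymmetricDifference.

Lemma imset_symdiff (aT rT : finType) (f : aT -> rT) (A B : {set aT}) :
  injective f -> f @: symdiff A B = symdiff (f @: A) (f @: B).
Proof.
move=> f_inj; apply/setP => v; rewrite !in_symdiff.
have [/codomP[a ->]|nfv] := boolP (v \in codom f).
  by rewrite !(mem_imset _ _ f_inj) in_symdiff.
have out (C : {set aT}) : (v \in f @: C) = false.
  by apply/imsetP => -[a _ ev]; move: nfv; rewrite ev codom_f.
by rewrite !out.
Qed.

Lemma imset_preimset (aT rT : finType) (f : aT -> rT) (Z : {set rT}) :
  Z \subset f @: setT -> f @: (f @^-1: Z) = Z.
Proof.
move=> /subsetP Zf; apply/setP => v; apply/imsetP/idP => [[a] | Zv].
  by rewrite inE => Za ->.
by have /imsetP[a _ ev] := Zf v Zv; exists a; rewrite // inE -ev.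
Qed.

Section Cube.
Variable t : nat.

Definition cube_of_set (D : {set 'I_t}) : cube_vertex t := [ffun i => i \in D].
Definition cube_support (a : cube_vertex t) : {set 'I_t} := [set i | a i].

Lemma cube_supportK : cancel cube_support cube_of_set.
Proof. by move=> a; apply/ffunP => i; rewrite ffunE inE. Qed.

Lemma cube_of_setK : cancel cube_of_set cube_support.
Proof. by move=> D; apply/setP => i; rewrite inE ffunE. Qed.

Lemma cube_adj_of_set D D' : cube_adj (cube_of_set D) (cube_of_set D') = tar_adj D D'.
Proof.
rewrite /cube_adj /tar_adj; congr (_ == 1); apply: eq_card => i.
by rewrite in_symdiff !inE !ffunE; case: (i \in D); case: (i \in D').
Qed.

Lemma imset_symdiff_cube (T : finType) (A : {set T}) (x : 'I_t -> T) :
  [set symdiff A (x @: cube_support a) | a : cube_vertex t]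
  = [set symdiff A Z | Z in powerset (x @: setT)].
Proof.
apply/setP => R; apply/imsetP/imsetP => [[a _ ->] | [Z]].
  by exists (x @: cube_support a); rewrite // powersetE imsetS ?subsetT.
rewrite powersetE => ZY ->; exists (cube_of_set (x @^-1: Z)) => //.
by rewrite cube_of_setK imset_preimset.
Qed.

End Cube.

Section CubeInTarGraph.
Variables (T : finType) (t : nat) (phi : cube_vertex t -> {set T}).
Hypothesis phi_inj : injective phi.
Hypothesis phi_adj : forall a b, cube_adj a b = tar_adj (phi a) (phi b).

Let phiD (D : {set 'I_t}) := phi (cube_of_set D).
Local Notation A := (phi (cube_of_set set0)).

Lemma phiD_inj : injective phiD.
Proof. exact: inj_comp phi_inj (can_inj (@cube_of_setK t)). Qed.

Lemma tar_adj_phiD D D' : tar_adj (phiD D) (phiD D') = tar_adj D D'.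
Proof. by rewrite -phi_adj cube_adj_of_set. Qed.

Section Generators.
Variable x : 'I_t -> T.
Hypothesis x_inj : injective x.
Hypothesis phiD_set1 : forall i, phiD [set i] = symdiff A [set x i].

Lemma phiD_symdiff D : phiD D = symdiff A (x @: D).
Proof.
have [n] := ubnP #|D|; elim: n D => // n IH D; rewrite ltnS => leDn.
have [-> | [i Di]] := set_0Vmem D.
  by rewrite imset0 symdiff0.
have [Di0 | [j Dij]] := set_0Vmem (D :\ i).
  have -> : D = [set i] by apply/eqP; rewrite eqEsubset sub1set Di andbT -setD_eq0 Di0.
  by rewrite phiD_set1 imset_set1.
move: Dij; rewrite !inE => /andP[ji Dj].
have Dji : i \in D :\ j by rewrite !inE eq_sym ji.
have DDij : D :\ i :\ j = D :\ j :\ i by rewrite !setDDl setUC.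
have ltD (k : 'I_t) : k \in D -> #|D :\ k| < n.
  by move=> Dk; apply: leq_trans leDn; rewrite (cardsD1 k D) Dk.
have ltDD : #|D :\ i :\ j| < n.
  by apply: leq_trans (ltD i Di); rewrite ltnS subset_leq_card // subsetDl.
have Dsum : D = symdiff (symdiff (D :\ j) (D :\ i)) (D :\ i :\ j).
  apply/setP => k; rewrite !in_symdiff !inE.
  have [-> | ki] := eqVneq k i; first by rewrite eq_sym ji Di.
  have [-> | kj] := eqVneq k j; first by case: (j \in D).
  by case: (k \in D).
have -> := @tar_adj_square _ (phiD (D :\ i :\ j)) (phiD (D :\ j)) (phiD (D :\ i)) (phiD D).
- apply/setP => v; rewrite !IH ?ltD //.
  rewrite [in RHS]Dsum !imset_symdiff // !in_symdiff.
  by case: (v \in A); do 3 case: (v \in _ @: _).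
- by rewrite tar_adj_phiD DDij tar_adj_setD1.
- by rewrite tar_adj_phiD tar_adj_setD1 // !inE ji Dj.
- by rewrite tar_adj_phiD tar_adj_setD1.
- by rewrite tar_adj_phiD tar_adj_setD1.
- by apply/eqP => /phiD_inj eD; move: Dji; rewrite eD !inE eqxx.
- by apply/eqP => /phiD_inj eD; move: Di; rewrite {1}eD !inE eqxx andbF.
Qed.

End Generators.

Lemma tar_cube_symdiff :
  exists x : 'I_t -> T, injective x /\ forall a, phi a = symdiff A (x @: cube_support a).
Proof.
have adjA i : tar_adj A (phiD [set i]).
  by rewrite tar_adj_phiD -(setDv [set i]) tar_adj_setD1 ?set11.
have /fin_all_exists[x phiD_set1] := fun i => tar_adj_flip (adjA i).
have x_inj : injective x.
  move=> i j xij; apply/set1_inj/phiD_inj.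
  by rewrite !phiD_set1 xij.
exists x; split=> // a.
by rewrite -{1}(cube_supportK a) -/(phiD _) (phiD_symdiff x_inj).
Qed.

End CubeInTarGraph.

Theorem lemma2p21 (X : graph_param) (HX : super_param X) (t : nat)
  (V : finType) (e : rel V) (HG : simple_graph e)
  (VH : {set {set V}})
  (HVH : forall S, S \in VH -> X V e S)
  (phi : cube_vertex t -> {set V})
  (phi_inj : injective phi)
  (phi_img : [set phi a | a : cube_vertex t] = VH)
  (phi_adj : forall a b, cube_adj a b = tar_adj (phi a) (phi b)) :
  exists S T : {set V},
    [/\ X V e S, X V e T, S \subset T, #|T :\: S| = t &
        VH = [set R : {set V} | (S \subset R) && (R \subset T)]].
Proof.
have [x [x_inj phiE]] := tar_cube_symdiff phi_inj phi_adj.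
set A := phi _ in phiE; set Y := x @: setT.
have VHE : VH = [set R : {set V} | (A :\: Y \subset R) && (R \subset A :|: Y)].
  by rewrite -phi_img (eq_imset _ phiE) imset_symdiff_cube symdiff_interval.
have SsubT : A :\: Y \subset A :|: Y by rewrite (subset_trans (subsetDl A Y)) ?subsetUl.
exists (A :\: Y), (A :|: Y); split=> //.
- by apply: HVH; rewrite VHE inE subxx SsubT.
- by apply: HVH; rewrite VHE inE subxx SsubT.
- by rewrite setUD_setD card_imset // cardsT card_ord.
Qed.
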